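(* Let $A,A^*:V\to V$ be diagonalizable linear maps, each with exactly $d+1$ distinct eigenvalues, let $E_0,\dots,E_d$ be an ordering of the primitive idempotents of $A$ and $E^*_0,\dots,E^*_d$ an ordering of those of $A^*$, with $\theta_i$ (resp. $\theta^*_i$) the eigenvalue of $A$ (resp. $A^*$) for $E_i$ (resp. $E^*_i$), and assume $\dim E^*_0V=1$. Let $\{\zeta_i\}_{i=0}^d$ be the split sequence. Then $$\zeta_d=\eta^*_d(\theta^*_0)\,\tau_d(\theta_d)\,\mathrm{tr}(E_dE^*_0),\qquad \sum_{i=0}^d\eta_{d-i}(\theta_0)\eta^*_{d-i}(\theta^*_0)\zeta_i=\eta^*_d(\theta^*_0)\,\eta_d(\theta_0)\,\mathrm{tr}(E_0E^*_0).$$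
   Context: $V$ is a nonzero finite-dimensional vector space over an algebraically closed field $\mathcal K$. The primitive idempotent of a diagonalizable $X$ for eigenvalue $\lambda_i$ is $\prod_{j\ne i}\frac{X-\lambda_jI}{\lambda_i-\lambda_j}$. Polynomials: $\eta_i(x)=\prod_{j=0}^{i-1}(x-\theta_{d-j})$, $\eta^*_i(x)=\prod_{j=0}^{i-1}(x-\theta^*_{d-j})$, $\tau_i(x)=\prod_{j=0}^{i-1}(x-\theta_j)$ for $0\le i\le d$ (empty products equal $1$). Since $\dim E^*_0V=1$, the map $E^*_0\tau_i(A)$ acts on $E^*_0V$ as a scalar $\chi_i$; the split sequence is $\zeta_i=(\theta^*_0-\theta^*_1)\cdots(\theta^*_0-\theta^*_i)\chi_i$ for $0\le i\le d$. *)

From HB Require Import structures.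
From mathcomp Require Import all_boot all_order all_algebra.
Set Implicit Arguments. Unset Strict Implicit. Unset Printing Implicit Defensive.
Import Order.TTheory GRing.Theory Num.Theory.
Local Open Scope ring_scope.

(* V = 'cV[K]_n (column vectors; a matrix M acts as v |-> M *m v). *)

Definition prim_idem (K : fieldType) (n d : nat) (X : 'M[K]_n)
  (th : 'I_d.+1 -> K) (i : 'I_d.+1) : 'M[K]_n :=
  \prod_(j < d.+1 | j != i) ((th i - th j)^-1 *: (X - (th j)%:M)).

Definition eta_pol (K : fieldType) (d : nat) (th : 'I_d.+1 -> K) (i : nat) (x : K) : K :=
  \prod_(j < i) (x - th (inord (d - j))).

Definition tau_pol (K : fieldType) (d : nat) (th : 'I_d.+1 -> K) (i : nat) (x : K) : K :=
  \prod_(j < i) (x - th (inord j)).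

Definition tau_mx (K : fieldType) (n d : nat) (th : 'I_d.+1 -> K) (i : nat)
  (X : 'M[K]_n) : 'M[K]_n :=
  \prod_(j < i) (X - (th (inord j))%:M).

Definition eigen_list (K : fieldType) (n d : nat) (X : 'M[K]_n) (th : 'I_d.+1 -> K) :=
  injective th /\ (forall i, eigenvalue X (th i)) /\
  (forall a, eigenvalue X a -> exists i, a = th i).

Definition split_seq (K : fieldType) (d : nat) (ths : 'I_d.+1 -> K) (chi : nat -> K)
  (i : nat) : K :=
  (\prod_(1 <= k < i.+1) (ths ord0 - ths (inord k))) * chi i.

From HB Require Import structures.
From mathcomp Require Import all_boot all_order all_algebra.
From mathcomp Require Import zify ring.
Set Implicit Arguments. Unset Strict Implicit. Unset Printing Implicit Defensive.
Import Order.TTheory GRing.Theory Num.Theory.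
Local Open Scope ring_scope.

(* Since E*_0 has rank one, E*_0 X E*_0 = tr(E*_0 X) E*_0 for every X, so
   chi_i = tr(E*_0 tau_i(A)), and eta*_(d-i)(th*_0) zeta_i = eta*_d(th*_0) chi_i.
   The extreme primitive idempotents are explicit polynomials in A:
   E_d = tau_d(A) / tau_d(th_d) and E_0 = prod_(k>=1) (A - th_k) / eta_d(th_0).
   The first identity follows at once; for the second, the Newton-type expansion
   prod_(k=1..d) (x - th_k) = sum_i eta_(d-i)(th_0) tau_i(x)
   turns the left-hand side into eta*_d(th*_0) tr(E*_0 prod_(k>=1) (A - th_k)). *)

Lemma rank1_scalar_action_trace (K : fieldType) (n : nat) (E X : 'M[K]_n.+1) (c : K) :
  \rank E = 1%N ->
  (forall w : 'cV[K]_n.+1, (E *m X) *m (E *m w) = c *: (E *m w)) ->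
  c = \tr (E *m X).
Proof.
move=> rkE actE.
have := mulmx_base E; move: (col_base E) (row_base E); rewrite rkE => C R defE.
set s := (R *m X *m C) 0 0.
have RXC : R *m X *m C = s%:M by apply/matrixP => i j; rewrite !ord1 [RHS]mxE eqxx mulr1n.
have actE_s w : (E *m X) *m (E *m w) = s *: (E *m w).
  by rewrite -defE !mulmxA -[C *m R *m X]mulmxA -[C *m (R *m X) *m C]mulmxA RXC
             mul_mx_scalar -!scalemxAl.
have -> : \tr (E *m X) = s by rewrite -defE -mulmxA mxtrace_mulC RXC mxtrace_scalar.
apply/eqP; apply: contraT => neq_cs.
have /negP[] : E != 0 by rewrite -mxrank_eq0 rkE.
apply/eqP/row_matrixP => i; apply/rowP => j; rewrite !mxE.
have /eqP := actE (delta_mx j 0); rewrite actE_s eq_sym -subr_eq0 -scalerBl scaler_eq0 subr_eq0.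
by rewrite (negbTE neq_cs) -colE => /eqP/colP/(_ i); rewrite !mxE.
Qed.

Lemma prod_subr_expansion (R : comPzRingType) (x : R) (t : nat -> R) (m : nat) :
  \sum_(i < m.+1) (\prod_(i.+1 <= k < m.+1) (t 0%N - t k)) * \prod_(j < i) (x - t j)
  = \prod_(1 <= k < m.+1) (x - t k).
Proof.
elim: m => [|m IHm]; first by rewrite big_ord1 !big_geq // big_ord0 mulr1.
set P := \prod_(1 <= k < m.+1) (x - t k).
have tauS : \prod_(j < m.+1) (x - t j) = (x - t 0%N) * P.
  by rewrite big_ord_recl /P big_add1 big_mkord.
rewrite big_ord_recr /= big_geq // mul1r tauS big_nat_recr //= -/P.
under eq_bigr do rewrite big_nat_recr //= mulrAC.
by rewrite -mulr_suml IHm -/P; ring.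
Qed.

Lemma inord0 (d : nat) : inord 0 = ord0 :> 'I_d.+1.
Proof. by apply: val_inj; rewrite /= inordK. Qed.

Section BigOrdExclude.

Variables (R : Type) (idx : R) (op : Monoid.law idx) (d : nat) (F : 'I_d.+1 -> R).

Lemma big_ord_neq_max :
  \big[op/idx]_(j < d.+1 | j != ord_max) F j = \big[op/idx]_(j < d) F (inord j).
Proof.
rewrite big_mkcond big_ord_recr /= eqxx Monoid.mulm1; apply: eq_bigr => j _.
have j_lt : (j < d.+1)%N := ltnW (ltn_ord j).
have -> : widen_ord (leqnSn d) j = inord j by apply: val_inj; rewrite /= inordK.
rewrite ifT //; apply: contraTneq (ltn_ord j) => /(congr1 val).
by rewrite /= inordK // => ->; rewrite ltnn.
Qed.

Lemma big_ord_neq0 :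
  \big[op/idx]_(j < d.+1 | j != ord0) F j = \big[op/idx]_(1 <= k < d.+1) F (inord k).
Proof.
rewrite [LHS]big_mkcond big_ord_recl /= Monoid.mul1m big_add1 /= big_mkord.
by apply: eq_bigr => j _; congr F; apply: val_inj; rewrite /= inordK // ltnS.
Qed.

End BigOrdExclude.

Lemma eta_pol_tail (K : fieldType) (d : nat) (th : 'I_d.+1 -> K) (x : K) (i : nat) :
  (i <= d)%N -> eta_pol th (d - i) x = \prod_(i.+1 <= k < d.+1) (x - th (inord k)).
Proof.
move=> le_id.
rewrite /eta_pol -(big_mkord xpredT (fun j => x - th (inord (d - j)))) big_nat_rev /=.
rewrite -{1}(add0n i.+1) big_addn subSS.
by apply: eq_big_nat => j /andP[_ lt_j]; rewrite add0n; congr (x - th (inord _)); lia.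
Qed.

Lemma eta_pol_full (K : fieldType) (d : nat) (th : 'I_d.+1 -> K) (x : K) :
  eta_pol th d x = \prod_(1 <= k < d.+1) (x - th (inord k)).
Proof. by rewrite -[X in eta_pol _ X](subn0 d) eta_pol_tail. Qed.

Lemma eta_pol_mul_split_seq (K : fieldType) (d : nat) (ths : 'I_d.+1 -> K) (chi : nat -> K)
    (i : nat) : (i <= d)%N ->
  eta_pol ths (d - i) (ths ord0) * split_seq ths chi i = eta_pol ths d (ths ord0) * chi i.
Proof.
move=> le_id; rewrite /split_seq mulrA eta_pol_tail // [X in X * _]mulrC.
by rewrite -big_cat_nat ?eta_pol_full.
Qed.

Lemma sum_eta_pol_tau_mx (K : fieldType) (n d : nat) (A : 'M[K]_n.+1) (th : 'I_d.+1 -> K) :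
  \sum_(i < d.+1) eta_pol th (d - i) (th ord0) *: tau_mx th i A
  = \prod_(1 <= k < d.+1) (A - (th (inord k))%:M).
Proof.
have XsubC a : horner_mx A ('X - a%:P) = A - a%:M.
  by rewrite rmorphB /= horner_mx_X horner_mx_C.
have -> : \prod_(1 <= k < d.+1) (A - (th (inord k))%:M)
          = horner_mx A (\prod_(1 <= k < d.+1) ('X - (th (inord k))%:P)).
  by rewrite rmorph_prod /=; apply: eq_bigr => k _; rewrite XsubC.
have /= <- := prod_subr_expansion 'X (fun k => (th (inord k))%:P) d.
rewrite rmorph_sum /=.
apply: eq_bigr => i _ /=; rewrite (eta_pol_tail _ _ (leq_ord i)) inord0.
rewrite rmorphM /= !rmorph_prod /=.
under [in RHS]eq_bigr do rewrite rmorphB /= !horner_mx_C -(raddfB (@scalar_mx _ _)).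
rewrite -rmorph_prod /= -scalemx1 mulr_algl.
by congr (_ *: _); apply: eq_bigr => j _; rewrite XsubC.
Qed.

Lemma prim_idem_ord_max (K : fieldType) (n d : nat) (X : 'M[K]_n.+1) (th : 'I_d.+1 -> K) :
  prim_idem X th ord_max = (tau_pol th d (th ord_max))^-1 *: tau_mx th d X.
Proof. by rewrite /prim_idem scaler_prod prodfV !big_ord_neq_max. Qed.

Lemma prim_idem_ord0 (K : fieldType) (n d : nat) (X : 'M[K]_n.+1) (th : 'I_d.+1 -> K) :
  prim_idem X th ord0
  = (eta_pol th d (th ord0))^-1 *: \prod_(1 <= k < d.+1) (X - (th (inord k))%:M).
Proof. by rewrite /prim_idem scaler_prod prodfV !big_ord_neq0 eta_pol_full. Qed.

Lemma tau_pol_ord_max_neq0 (K : fieldType) (d : nat) (th : 'I_d.+1 -> K) :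
  injective th -> tau_pol th d (th ord_max) != 0.
Proof.
move=> th_inj; rewrite prodf_seq_neq0; apply/allP => j _ /=; rewrite subr_eq0.
have j_lt : (j < d.+1)%N := ltnW (ltn_ord j).
apply: contraTneq (ltn_ord j) => /th_inj/(congr1 val).
by rewrite /= inordK // => <-; rewrite ltnn.
Qed.

Lemma eta_pol_ord0_neq0 (K : fieldType) (d : nat) (th : 'I_d.+1 -> K) :
  injective th -> eta_pol th d (th ord0) != 0.
Proof.
move=> th_inj; rewrite eta_pol_full prodf_seq_neq0.
apply/allP => k; rewrite mem_index_iota => /andP[k_gt0 k_le] /=; rewrite subr_eq0.
by apply: contraTneq k_gt0 => /th_inj/(congr1 val); rewrite /= inordK // => <-.
Qed.

Theorem lemma3p8 (K : closedFieldType) (n d : nat) (A As : 'M[K]_n.+1)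
  (th ths : 'I_d.+1 -> K) (chi : nat -> K) :
  diagonalizable A -> diagonalizable As ->
  eigen_list A th -> eigen_list As ths ->
  \rank (prim_idem As ths ord0) = 1%N ->
  (* chi_i: the scalar by which E*_0 tau_i(A) acts on E*_0 V *)
  (forall i : nat, (i <= d)%N -> forall w : 'cV[K]_n.+1,
     (prim_idem As ths ord0 *m tau_mx th i A) *m (prim_idem As ths ord0 *m w)
       = chi i *: (prim_idem As ths ord0 *m w)) ->
  split_seq ths chi d
    = eta_pol ths d (ths ord0) * tau_pol th d (th ord_max)
      * \tr (prim_idem A th ord_max *m prim_idem As ths ord0)
  /\ \sum_(i < d.+1) eta_pol th (d - i)%N (th ord0) * eta_pol ths (d - i)%N (ths ord0)
                     * split_seq ths chi i
    = eta_pol ths d (ths ord0) * eta_pol th d (th ord0)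
      * \tr (prim_idem A th ord0 *m prim_idem As ths ord0).
Proof.
move=> _ _ [th_inj _] _ rkE chiP.
set Es := prim_idem As ths ord0.
have chi_tr i : (i <= d)%N -> chi i = \tr (Es *m tau_mx th i A).
  by move=> le_id; apply: rank1_scalar_action_trace rkE _; apply: chiP.
split.
  have := eta_pol_mul_split_seq ths chi (leqnn d).
  rewrite subnn [eta_pol _ 0 _]big_ord0 mul1r => ->.
  rewrite chi_tr // prim_idem_ord_max -scalemxAl mxtraceZ mxtrace_mulC.
  by rewrite -mulrA mulVKf ?tau_pol_ord_max_neq0.
under eq_bigr => i _ do rewrite -mulrA (eta_pol_mul_split_seq _ _ (leq_ord i)) mulrCA
                             (chi_tr i (leq_ord i)) -mxtraceZ scalemxAr.
rewrite -mulr_sumr -raddf_sum -mulmx_sumr sum_eta_pol_tau_mx.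
rewrite prim_idem_ord0 -scalemxAl mxtraceZ mxtrace_mulC.
by rewrite -mulrA mulVKf ?eta_pol_ord0_neq0.
Qed.
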